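(* Let $\mathcal{F}$ be a complete pointed virtually inscribable fan in $\mathbb{R}^2$ with $n\ge3$ regions and profile $\beta=(\beta_0,\dots,\beta_{n-1})$ (indices modulo $n$). If $n$ is odd, then $\mathcal{F}$ is inscribable if and only if $\beta_{j}-\beta_{j+1}+\beta_{j+2}-\cdots-\beta_{j+n-2}+\beta_{j+n-1}>0$ for all $0\le j<n$. If $n=2m$ is even, then $\mathcal{F}$ is inscribable if and only if $\sum_{i=1}^{h}\beta_{2i+j}+\sum_{i=h+1}^{m-1}\beta_{2i+1+j}<\pi$ for all $0\le h<m$ and $0\le j<n$.
   Context: The regions $R_0,\dots,R_{n-1}$ of $\mathcal{F}$ are ordered counterclockwise and $\beta_i\in(0,\pi)$ is the angle of $R_i$; $\beta$ determines $\mathcal{F}$ up to rotation. A fan is inscribable if it is the normal fan of a polygon whose vertices lie on a circle. The fan is virtually inscribable if there is a nonzero $v\in\mathbb{R}^2$ fixed by the composition of the reflections in the $n$ rays of $\mathcal{F}$ taken in cyclic order (equivalently: for $n$ odd always; for $n$ even iff the alternate angles $\beta_0+\beta_2+\cdots+\beta_{n-2}$ sum to $\pi$). *)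

From Stdlib Require Import Reals Lra Lia Arith.
Open Scope R_scope.

Fixpoint rsum (f : nat -> R) (k : nat) : R :=
  match k with O => 0 | S k' => rsum f k' + f k' end.

Definition bt (n : nat) (beta : nat -> R) (i : nat) : R := beta (i mod n).

(* direction angle of ray k (ray 0 fixed at angle 0: the fan is determined by
   beta up to rotation, and inscribability is rotation invariant) *)
Definition theta (n : nat) (beta : nat -> R) (k : nat) : R := rsum (bt n beta) (k mod n).

Definition ray (n : nat) (beta : nat -> R) (k : nat) : R * R :=
  (cos (theta n beta k), sin (theta n beta k)).

Definition dot (p q : R * R) : R := fst p * fst q + snd p * snd q.

Definition region (n : nat) (beta : nat -> R) (i : nat) (x : R * R) : Prop :=
  exists a b : R, 0 <= a /\ 0 <= b /\
    x = (a * fst (ray n beta i) + b * fst (ray n beta (S i)),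
         a * snd (ray n beta i) + b * snd (ray n beta (S i))).

(* normal cone at v of the polygon P = conv {V 0, ..., V (n-1)}:
   the u with <u,x> <= <u,v> for all x in P (equivalently for all generators) *)
Definition normal_cone (n : nat) (V : nat -> R * R) (v : R * R) (u : R * R) : Prop :=
  forall j, (j < n)%nat -> dot u (V j) <= dot u v.

(* the fan with profile beta is the normal fan of conv{V 0..V (n-1)}:
   the maximal cones (normal cones of the vertices) are exactly the regions *)
Definition is_normal_fan_of (n : nat) (beta : nat -> R) (V : nat -> R * R) : Prop :=
  forall i, (i < n)%nat -> forall u, region n beta i u <-> normal_cone n V (V i) u.

Definition inscribable (n : nat) (beta : nat -> R) : Prop :=
  exists (V : nat -> R * R) (c : R * R) (r : R),
    0 < r /\
    (forall i, (i < n)%nat ->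
       (fst (V i) - fst c) ^ 2 + (snd (V i) - snd c) ^ 2 = r ^ 2) /\
    is_normal_fan_of n beta V.

(* reflection in the line spanned by the unit vector u *)
Definition refl (u x : R * R) : R * R :=
  (2 * dot u x * fst u - fst x, 2 * dot u x * snd u - snd x).

Fixpoint comp_refl (n : nat) (beta : nat -> R) (k : nat) (x : R * R) : R * R :=
  match k with
  | O => x
  | S k' => refl (ray n beta k') (comp_refl n beta k' x)
  end.

Definition virtually_inscribable (n : nat) (beta : nat -> R) : Prop :=
  exists v : R * R, v <> (0, 0) /\ comp_refl n beta n v = v.

Definition complete_pointed_profile (n : nat) (beta : nat -> R) : Prop :=
  (forall i, (i < n)%nat -> 0 < beta i < PI) /\ rsum beta n = 2 * PI.

(* For a polygon inscribed in a circle, the outer normal ray k of the edge from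
   vertex k - 1 to vertex k bisects the central angle 2 g_k of that edge, so the
   angle between consecutive rays is beta_k = g_k + g_(k+1) with all g_k > 0.
   Conversely, any positive cyclic solution of g_k + g_(k+1) = beta_k places
   vertices on the unit circle at angles theta_k + g_k, and their convex hull has
   the given normal fan.  Inscribability is thus positive solvability of this cyclic
   linear system.  For n odd the system has the unique solution g_j = half the
   alternating sum starting at j.  For n = 2m it is solvable iff the alternate
   angles sum to PI (which virtual inscribability provides), the solutions are
   f_k + t (-1)^k for one particular solution f, and some t makes them all positive
   iff f_(2a) + f_(2b+1) > 0 for all a, b; each left-hand side of the criterion is
   PI - g_(j+1) - g_(j+2h+2), and these pairs of indices cover all (even, odd) pairs. *)

From Stdlib Require Import Reals Arith Lra Lia Psatz.
Open Scope R_scope.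

(** * Finite sums *)

Lemma rsum_ext f g k : (forall i, (i < k)%nat -> f i = g i) -> rsum f k = rsum g k.
Proof.
  induction k as [|k IH]; intros H; simpl; [reflexivity|].
  rewrite IH by (intros; apply H; lia).
  rewrite H by lia; reflexivity.
Qed.

Lemma rsum_plus f g k : rsum (fun i => f i + g i) k = rsum f k + rsum g k.
Proof. induction k; simpl; [|rewrite IHk]; lra. Qed.

Lemma rsum_opp f k : rsum (fun i => - f i) k = - rsum f k.
Proof. induction k; simpl; [|rewrite IHk]; lra. Qed.

Lemma rsum_succ_l f k : rsum f (S k) = f 0%nat + rsum (fun i => f (S i)) k.
Proof. induction k; simpl in *; [|rewrite IHk]; lra. Qed.

Lemma rsum_add f a b : rsum f (a + b) = rsum f a + rsum (fun i => f (a + i)%nat) b.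
Proof.
  induction b as [|b IH]; simpl.
  - rewrite Nat.add_0_r; lra.
  - rewrite Nat.add_succ_r; simpl; rewrite IH; lra.
Qed.

Lemma rsum_telescope h k : rsum (fun i => h i - h (S i)) k = h 0%nat - h k.
Proof. induction k; simpl; [|rewrite IHk]; lra. Qed.

Lemma rsum_pairs f h :
  rsum (fun i => f (2 * i)%nat + f (2 * i + 1)%nat) h = rsum f (2 * h).
Proof.
  induction h as [|h IH]; [simpl; lra|].
  replace (2 * S h)%nat with (S (S (2 * h))) by lia.
  cbn [rsum]; rewrite IH.
  replace (2 * h + 1)%nat with (S (2 * h)) by lia; lra.
Qed.

Lemma rsum_pos f k :
  (0 < k)%nat -> (forall i, (i < k)%nat -> 0 < f i) -> 0 < rsum f k.
Proof.
  induction k as [|k IH]; intros Hk H; [lia|]; simpl.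
  assert (0 < f k) by (apply H; lia).
  destruct k as [|k]; [simpl; lra|].
  assert (0 < rsum f (S k)) by (apply IH; [lia | intros; apply H; lia]); lra.
Qed.

Lemma rsum_shift_periodic f k :
  (forall i, f (i + k)%nat = f i) -> forall j, rsum (fun i => f (j + i)%nat) k = rsum f k.
Proof.
  intros Hper j; induction j as [|j IH]; [reflexivity|].
  rewrite <- IH; destruct k; [reflexivity|].
  rewrite (rsum_succ_l (fun i => f (j + i)%nat)); cbn [rsum].
  rewrite (rsum_ext (fun i => f (j + S i)%nat) (fun i => f (S j + i)%nat))
    by (intros; f_equal; lia).
  replace (S j + k)%nat with (j + S k)%nat by lia.
  rewrite Hper, Nat.add_0_r; lra.
Qed.

Lemma pow_m1_even m : (-1) ^ (2 * m) = 1.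
Proof. rewrite pow_mult; replace ((-1) ^ 2) with 1 by ring; apply pow1. Qed.

Lemma pow_m1_odd m : (-1) ^ (2 * m + 1) = -1.
Proof. rewrite pow_add, pow_m1_even; ring. Qed.

Lemma argmin_lt (f : nat -> R) m :
  (0 < m)%nat -> exists a, (a < m)%nat /\ forall b, (b < m)%nat -> f a <= f b.
Proof.
  induction m as [|m IH]; intros Hm; [lia|].
  destruct (Nat.eq_dec m 0) as [->|Hm0].
  - exists 0%nat; split; [lia|]; intros b Hb; replace b with 0%nat by lia; lra.
  - destruct IH as [a [Ha Hmin]]; [lia|].
    destruct (Rle_dec (f a) (f m)).
    + exists a; split; [lia|]; intros b Hb.
      destruct (Nat.eq_dec b m) as [->|]; [lra | apply Hmin; lia].
    + exists m; split; [lia|]; intros b Hb.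
      destruct (Nat.eq_dec b m) as [->|]; [lra|].
      assert (f a <= f b) by (apply Hmin; lia); lra.
Qed.

Lemma periodic_pos (g : nat -> R) n :
  (0 < n)%nat -> (forall k, g (k + n)%nat = g k) ->
  (forall k, (k < n)%nat -> 0 < g k) -> forall k, 0 < g k.
Proof.
  intros Hn Hper Hpos k; induction k as [k IH] using lt_wf_ind.
  destruct (Nat.lt_ge_cases k n); [auto|].
  replace k with ((k - n) + n)%nat by lia; rewrite Hper; apply IH; lia.
Qed.

(** * Plane geometry *)

Definition cross (p q : R * R) : R := fst p * snd q - snd p * fst q.

Definition dir (a : R) : R * R := (cos a, sin a).

Lemma cross_antisym p q : cross p q = - cross q p.
Proof. unfold cross; ring. Qed.

Lemma lagrange_dot p v r : dot p v * dot r r = dot r v * dot r p + cross r v * cross r p.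
Proof. unfold dot, cross; ring. Qed.

Lemma frame_decomp v r :
  fst v * dot r r = dot r v * fst r - cross r v * snd r /\
  snd v * dot r r = dot r v * snd r + cross r v * fst r.
Proof. unfold dot, cross; split; ring. Qed.

Lemma dot_dir a b : dot (dir a) (dir b) = cos (b - a).
Proof. unfold dot, dir; simpl; rewrite cos_minus; ring. Qed.

Lemma cross_dir a b : cross (dir a) (dir b) = sin (b - a).
Proof. unfold cross, dir; simpl; rewrite sin_minus; ring. Qed.

Lemma dir_unit a : dot (dir a) (dir a) = 1.
Proof. rewrite dot_dir, Rminus_diag, cos_0; reflexivity. Qed.

Lemma dir_add_2PI a : dir (a + 2 * PI) = dir a.
Proof.
  unfold dir; rewrite cos_plus, sin_plus, cos_2PI, sin_2PI; f_equal; ring.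
Qed.

Lemma eq_dir_of_dot_cross a t w :
  dot (dir a) w = cos t -> cross (dir a) w = sin t -> w = dir (a + t).
Proof.
  intros Hd Hc; destruct (frame_decomp w (dir a)) as [E1 E2].
  rewrite dir_unit, Hd, Hc in E1, E2; unfold dir in *; simpl in *.
  rewrite cos_plus, sin_plus; destruct w; simpl in *; f_equal; lra.
Qed.

Lemma dot_dir_chord u a t :
  dot u (dir (a + t)) - dot u (dir (a - t)) = 2 * sin t * cross (dir a) u.
Proof.
  unfold dot, cross, dir; simpl.
  rewrite cos_plus, cos_minus, sin_plus, sin_minus; ring.
Qed.

Lemma cone_of_cross p q u :
  0 < cross p q -> 0 <= cross p u -> 0 <= cross u q ->
  exists a b, 0 <= a /\ 0 <= b /\
    u = (a * fst p + b * fst q, a * snd p + b * snd q).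
Proof.
  intros Hpq Hpu Huq.
  exists (cross u q / cross p q), (cross p u / cross p q).
  split; [|split]; [apply Rle_mult_inv_pos; lra .. |].
  destruct u, p, q; unfold cross in *; simpl in *; f_equal; field; lra.
Qed.

Lemma unit_same_dot r a b :
  dot r r = 1 -> dot a a = 1 -> dot b b = 1 -> dot r a = dot r b -> a <> b ->
  cross r b = - cross r a /\ cross r a <> 0.
Proof.
  intros Hr Ha Hb Hd Hab.
  assert (Hsq : cross r a * cross r a = cross r b * cross r b).
  { pose proof (lagrange_dot a a r); pose proof (lagrange_dot b b r); nra. }
  assert (Hne : cross r a <> cross r b).
  { intros Hc; apply Hab.
    destruct (frame_decomp a r) as [A1 A2], (frame_decomp b r) as [B1 B2].
    rewrite Hr, Hd, Hc in *; destruct a, b; simpl in *; f_equal; lra. }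
  split; [nra|]; intros H0; apply Hne; nra.
Qed.

Lemma dot_comb a b p q v :
  dot (a * fst p + b * fst q, a * snd p + b * snd q) v = a * dot p v + b * dot q v.
Proof. unfold dot; simpl; ring. Qed.

Definition rot (a : R) (x : R * R) : R * R :=
  (cos a * fst x - sin a * snd x, sin a * fst x + cos a * snd x).

Lemma refl_dir a x :
  refl (dir a) x = (cos (2 * a) * fst x + sin (2 * a) * snd x,
                    sin (2 * a) * fst x - cos (2 * a) * snd x).
Proof.
  unfold refl, dot, dir; simpl; f_equal.
  - rewrite cos_2a_cos, sin_2a; ring.
  - rewrite cos_2a_sin, sin_2a; ring.
Qed.

Lemma refl_refl_dir a b x : refl (dir b) (refl (dir a) x) = rot (2 * (b - a)) x.
Proof.
  rewrite !refl_dir; unfold rot; simpl.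
  replace (2 * (b - a)) with (2 * b - 2 * a) by ring.
  rewrite cos_minus, sin_minus; f_equal; ring.
Qed.

Lemma rot_add a b x : rot a (rot b x) = rot (a + b) x.
Proof. unfold rot; simpl; rewrite cos_plus, sin_plus; f_equal; ring. Qed.

Lemma rot_0 x : rot 0 x = x.
Proof. unfold rot; rewrite cos_0, sin_0; destruct x; simpl; f_equal; ring. Qed.

Lemma rot_fixed_nonzero a v : v <> (0, 0) -> rot a v = v -> cos a = 1.
Proof.
  intros Hv Hfix; destruct v as [v1 v2]; unfold rot in Hfix; simpl in Hfix.
  injection Hfix as E1 E2.
  pose proof (sin2_cos2 a) as Hsc; unfold Rsqr in Hsc.
  destruct (Req_dec (cos a) 1) as [|Hc]; [assumption|]; exfalso; apply Hv.
  assert (Hpos : 0 < 2 - 2 * cos a) by nra.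
  assert (A1 : (2 - 2 * cos a) * v1 = 0) by nra.
  assert (A2 : (2 - 2 * cos a) * v2 = 0) by nra.
  apply Rmult_integral in A1, A2.
  destruct A1, A2; [lra .. | subst; reflexivity].
Qed.

(** * Rays and regions of the fan *)

Lemma mod_add_same k n : ((k + n) mod n = k mod n)%nat.
Proof. replace (k + n)%nat with (k + 1 * n)%nat by lia; apply Nat.Div0.mod_add. Qed.

Lemma dir_mod_periodic (f : nat -> R) n :
  (0 < n)%nat -> (forall k, f (k + n)%nat = f k + 2 * PI) ->
  forall k, dir (f (k mod n)) = dir (f k).
Proof.
  intros Hn Hper k; induction k as [k IH] using lt_wf_ind.
  destruct (Nat.lt_ge_cases k n) as [Hk|Hk]; [rewrite Nat.mod_small; auto|].
  replace k with ((k - n) + n)%nat by lia.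
  rewrite Hper, dir_add_2PI, mod_add_same; apply IH; lia.
Qed.

Definition theta_lift (n : nat) (beta : nat -> R) (k : nat) : R := rsum (bt n beta) k.

Section Profile.

Variable n : nat.
Variable beta : nat -> R.
Hypothesis n_pos : (0 < n)%nat.
Hypothesis beta_range : forall i, (i < n)%nat -> 0 < beta i < PI.
Hypothesis beta_sum : rsum beta n = 2 * PI.

Lemma bt_small k : (k < n)%nat -> bt n beta k = beta k.
Proof. intros; unfold bt; rewrite Nat.mod_small; auto. Qed.

Lemma bt_add_n k : bt n beta (k + n) = bt n beta k.
Proof. unfold bt; rewrite mod_add_same; reflexivity. Qed.

Lemma bt_range k : 0 < bt n beta k < PI.
Proof. apply beta_range, Nat.mod_upper_bound; lia. Qed.

Lemma rsum_bt : rsum (bt n beta) n = 2 * PI.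
Proof. rewrite <- beta_sum; apply rsum_ext; intros; apply bt_small; auto. Qed.

Lemma theta_lift_add_n k : theta_lift n beta (k + n) = theta_lift n beta k + 2 * PI.
Proof.
  unfold theta_lift; rewrite rsum_add, rsum_shift_periodic, rsum_bt; auto.
  intros; apply bt_add_n.
Qed.

Lemma ray_dir k : ray n beta k = dir (theta_lift n beta k).
Proof. apply (dir_mod_periodic (theta_lift n beta)); auto using theta_lift_add_n. Qed.

Lemma ray_add_n k : ray n beta (k + n) = ray n beta k.
Proof. rewrite !ray_dir, theta_lift_add_n; apply dir_add_2PI. Qed.

Lemma ray_unit k : dot (ray n beta k) (ray n beta k) = 1.
Proof. rewrite ray_dir; apply dir_unit. Qed.

Lemma cross_ray_succ k : cross (ray n beta k) (ray n beta (S k)) = sin (bt n beta k).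
Proof. rewrite !ray_dir, cross_dir; unfold theta_lift; simpl; f_equal; ring. Qed.

Lemma region_mod i u : region n beta (i mod n) u <-> region n beta i u.
Proof.
  unfold region, ray, theta; rewrite Nat.Div0.mod_mod.
  replace (S (i mod n) mod n)%nat with (S i mod n)%nat; [tauto|].
  replace (S i) with (i + 1)%nat by lia; replace (S (i mod n)) with (i mod n + 1)%nat by lia.
  symmetry; apply Nat.Div0.add_mod_idemp_l.
Qed.

Lemma region_ray_l i : region n beta i (ray n beta i).
Proof.
  exists 1, 0; split; [lra | split; [lra|]].
  destruct (ray n beta i), (ray n beta (S i)); simpl; f_equal; ring.
Qed.

Lemma region_ray_r i : region n beta i (ray n beta (S i)).
Proof.
  exists 0, 1; split; [lra | split; [lra|]].
  destruct (ray n beta i), (ray n beta (S i)); simpl; f_equal; ring.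
Qed.

Lemma region_cross_nonneg i u : region n beta i u -> 0 <= cross (ray n beta i) u.
Proof.
  intros [a [b [Ha [Hb ->]]]].
  pose proof (cross_ray_succ i) as Hc; pose proof (bt_range i) as [B0 B1].
  pose proof (sin_gt_0 _ B0 B1).
  replace (cross _ _) with (b * cross (ray n beta i) (ray n beta (S i)))
    by (unfold cross; simpl; ring).
  rewrite Hc; nra.
Qed.

Lemma region_of_cross i u :
  0 <= cross (ray n beta i) u -> 0 <= cross u (ray n beta (S i)) -> region n beta i u.
Proof.
  intros H1 H2; apply cone_of_cross; auto.
  rewrite cross_ray_succ; destruct (bt_range i); apply sin_gt_0; auto.
Qed.

End Profile.

(** * Inscribed polygons and vertex angles *)

(* [g k] is half the central angle of the edge whose outer normal is ray k. *)
Record vertex_angles (n : nat) (beta : nat -> R) (g : nat -> R) : Prop := {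
  vertex_angles_pos : forall k, 0 < g k;
  vertex_angles_step : forall k, g k + g (S k) = bt n beta k;
  vertex_angles_periodic : forall k, g (k + n)%nat = g k }.

Lemma cos_le_of_window d x : 0 <= d <= PI -> d <= x <= 2 * PI - d -> cos x <= cos d.
Proof.
  intros Hd Hx; destruct (Rle_dec x PI).
  - apply cos_decr_1; lra.
  - replace (cos x) with (cos (2 * PI - x))
      by (rewrite cos_minus, cos_2PI, sin_2PI; ring).
    apply cos_decr_1; lra.
Qed.

Section PolygonOfAngles.

Variable n : nat.
Variable beta : nat -> R.
Hypothesis n_pos : (0 < n)%nat.
Hypothesis beta_range : forall i, (i < n)%nat -> 0 < beta i < PI.
Hypothesis beta_sum : rsum beta n = 2 * PI.
Variable g : nat -> R.
Hypothesis g_angles : vertex_angles n beta g.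

Let g_pos := vertex_angles_pos n beta g g_angles.
Let g_step := vertex_angles_step n beta g g_angles.
Let g_periodic := vertex_angles_periodic n beta g g_angles.

Definition vertex_angle k := theta_lift n beta k + g k.
Definition vertex k := dir (vertex_angle k).

Lemma g_lt_PI k : g k < PI.
Proof.
  pose proof (g_step k); pose proof (g_pos (S k));
    pose proof (bt_range n beta n_pos beta_range k); lra.
Qed.

Lemma vertex_angle_pred k : vertex_angle k = theta_lift n beta (S k) - g (S k).
Proof. unfold vertex_angle, theta_lift; simpl; pose proof (g_step k); lra. Qed.

Lemma vertex_angle_add_n k : vertex_angle (k + n) = vertex_angle k + 2 * PI.
Proof.
  unfold vertex_angle; rewrite theta_lift_add_n, g_periodic; auto; ring.
Qed.

Lemma vertex_angle_le j k : (j <= k)%nat -> vertex_angle j <= vertex_angle k.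
Proof.
  induction 1 as [|k _ IH]; [lra|].
  pose proof (vertex_angle_pred k); pose proof (g_pos (S k)).
  unfold vertex_angle in *; lra.
Qed.

Lemma vertex_mod k : vertex (k mod n) = vertex k.
Proof. apply dir_mod_periodic; auto using vertex_angle_add_n. Qed.

(* Ray k bisects the central angle of the edge from vertex (k - 1) to vertex k,
   and the vertices k, ..., k + n - 1 lie on the arc away from that edge. *)
Lemma dot_ray_vertex_window k j :
  (k <= j < k + n)%nat -> dot (ray n beta k) (vertex j) <= cos (g k).
Proof.
  intros Hj; unfold vertex; rewrite ray_dir, dot_dir by auto.
  pose proof (g_pos k); pose proof (g_lt_PI k).
  apply cos_le_of_window; [lra|]; split.
  - pose proof (vertex_angle_le k j ltac:(lia)) as Hlow.
    unfold vertex_angle at 1 in Hlow; lra.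
  - pose proof (vertex_angle_le j (k + n - 1) ltac:(lia)) as Hup.
    rewrite (vertex_angle_pred (k + n - 1)) in Hup.
    replace (S (k + n - 1)) with (k + n)%nat in Hup by lia.
    rewrite theta_lift_add_n, g_periodic in Hup by auto; lra.
Qed.

Lemma vertex_add_n k : vertex (k + n) = vertex k.
Proof. unfold vertex; rewrite vertex_angle_add_n; apply dir_add_2PI. Qed.

Lemma dot_ray_vertex_le k j :
  (k <= n)%nat -> (j < n)%nat -> dot (ray n beta k) (vertex j) <= cos (g k).
Proof.
  intros Hk Hj; destruct (Nat.le_gt_cases k j).
  - apply dot_ray_vertex_window; lia.
  - rewrite <- vertex_add_n; apply dot_ray_vertex_window; lia.
Qed.

Lemma dot_ray_vertex k : dot (ray n beta k) (vertex k) = cos (g k).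
Proof. unfold vertex, vertex_angle; rewrite ray_dir, dot_dir by auto; f_equal; ring. Qed.

Lemma dot_ray_succ_vertex k : dot (ray n beta (S k)) (vertex k) = cos (g (S k)).
Proof.
  unfold vertex; rewrite ray_dir, dot_dir, vertex_angle_pred by auto.
  rewrite <- cos_neg; f_equal; ring.
Qed.

Lemma region_normal_cone_vertex i u :
  (i < n)%nat -> region n beta i u -> normal_cone n vertex (vertex i) u.
Proof.
  intros Hi [a [b [Ha [Hb ->]]]] j Hj; rewrite !dot_comb.
  rewrite dot_ray_vertex, dot_ray_succ_vertex.
  pose proof (dot_ray_vertex_le i j ltac:(lia) Hj).
  pose proof (dot_ray_vertex_le (S i) j ltac:(lia) Hj).
  apply Rplus_le_compat; apply Rmult_le_compat_l; auto.
Qed.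

(* Vertices i - 1 and i are symmetric about ray i, vertices i and i + 1 about
   ray (i + 1), so comparing u with them fixes the sign of u against both rays. *)
Lemma normal_cone_vertex_region i u :
  normal_cone n vertex (vertex i) u -> region n beta i u.
Proof.
  intros Hcone.
  assert (Hmod : forall k, (k mod n < n)%nat) by (intros; apply Nat.mod_upper_bound; lia).
  pose proof (Hcone _ (Hmod (i + n - 1)%nat)) as Hprev.
  pose proof (Hcone _ (Hmod (S i))) as Hnext.
  rewrite vertex_mod in Hprev, Hnext.
  assert (Eprev : vertex (i + n - 1) = dir (theta_lift n beta i - g i)).
  { unfold vertex; rewrite vertex_angle_pred; replace (S (i + n - 1)) with (i + n)%nat by lia.
    rewrite theta_lift_add_n, g_periodic by auto.
    replace (_ + 2 * PI - g i) with (theta_lift n beta i - g i + 2 * PI) by ring.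
    apply dir_add_2PI. }
  assert (Eself : vertex i = dir (theta_lift n beta (S i) - g (S i)))
    by (unfold vertex; rewrite vertex_angle_pred; reflexivity).
  rewrite Eprev in Hprev; rewrite Eself in Hnext.
  unfold vertex, vertex_angle in Hprev, Hnext.
  pose proof (dot_dir_chord u (theta_lift n beta i) (g i)) as Ci.
  pose proof (dot_dir_chord u (theta_lift n beta (S i)) (g (S i))) as Cs.
  rewrite <- ray_dir in Ci, Cs by auto.
  pose proof (g_pos i); pose proof (g_lt_PI i).
  pose proof (g_pos (S i)); pose proof (g_lt_PI (S i)).
  pose proof (sin_gt_0 (g i)); pose proof (sin_gt_0 (g (S i))).
  apply region_of_cross; auto; [|rewrite cross_antisym]; nra.
Qed.

Lemma inscribable_of_vertex_angles : inscribable n beta.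
Proof.
  exists vertex, (0, 0), 1; split; [lra | split].
  - intros i _; pose proof (dir_unit (vertex_angle i)) as U.
    unfold vertex, dot, dir in *; simpl in *; lra.
  - intros i Hi u; split;
      [apply region_normal_cone_vertex | apply normal_cone_vertex_region]; auto.
Qed.

End PolygonOfAngles.

Definition normalize (c : R * R) (r : R) (x : R * R) : R * R :=
  ((fst x - fst c) / r, (snd x - snd c) / r).

Lemma dot_normalize_le c r u x y :
  0 < r -> dot u (normalize c r x) <= dot u (normalize c r y) <-> dot u x <= dot u y.
Proof.
  intros Hr.
  assert (E : dot u (normalize c r x) - dot u (normalize c r y) = (dot u x - dot u y) * / r)
    by (unfold dot, normalize; simpl; field; lra).
  pose proof (Rinv_0_lt_compat r Hr) as Hinv; pose proof (Rinv_r r ltac:(lra)) as Hrr.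
  split; intros Hle; nra.
Qed.

Lemma acos_unit_pos x y :
  x * x + y * y = 1 -> 0 < y -> 0 < acos x < PI /\ cos (acos x) = x /\ sin (acos x) = y.
Proof.
  intros Hxy Hy; assert (Hx : -1 <= x <= 1) by nra.
  assert (Hs : sin (acos x) = y).
  { rewrite sin_acos by auto; replace (1 - x²) with (y²) by (unfold Rsqr; lra).
    apply sqrt_Rsqr; lra. }
  pose proof (acos_bound x).
  repeat split; auto using cos_acos.
  - destruct (Req_dec (acos x) 0) as [E|]; [rewrite E, sin_0 in Hs; lra | lra].
  - destruct (Req_dec (acos x) PI) as [E|]; [rewrite E, sin_PI in Hs; lra | lra].
Qed.

Section InscribedPolygon.

Variable n : nat.
Variable beta : nat -> R.
Hypothesis n_pos : (0 < n)%nat.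
Hypothesis beta_range : forall i, (i < n)%nat -> 0 < beta i < PI.
Hypothesis beta_sum : rsum beta n = 2 * PI.
Variable V : nat -> R * R.
Variable c : R * R.
Variable r : R.
Hypothesis r_pos : 0 < r.
Hypothesis V_on_circle : forall i, (i < n)%nat ->
  (fst (V i) - fst c) ^ 2 + (snd (V i) - snd c) ^ 2 = r ^ 2.
Hypothesis V_fan : is_normal_fan_of n beta V.

Let mod_lt k : (k mod n < n)%nat.
Proof. apply Nat.mod_upper_bound; lia. Qed.

Definition unit_vertex k := normalize c r (V (k mod n)).

Lemma unit_vertex_unit k : dot (unit_vertex k) (unit_vertex k) = 1.
Proof.
  pose proof (V_on_circle _ (mod_lt k)).
  unfold unit_vertex, normalize, dot; simpl; field_simplify_eq; nra.
Qed.

Lemma unit_vertex_add_n k : unit_vertex (k + n) = unit_vertex k.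
Proof. unfold unit_vertex; rewrite mod_add_same; reflexivity. Qed.

Lemma unit_vertex_mod k : unit_vertex (k mod n) = unit_vertex k.
Proof. unfold unit_vertex; rewrite Nat.Div0.mod_mod; reflexivity. Qed.

Lemma region_iff_normal_cone_unit_vertex i u :
  region n beta i u <-> normal_cone n unit_vertex (unit_vertex i) u.
Proof.
  rewrite <- region_mod, (V_fan _ (mod_lt i)) by auto; unfold normal_cone, unit_vertex.
  split; intros H j Hj; specialize (H j Hj); rewrite Nat.mod_small in * by auto;
    [apply <- dot_normalize_le | apply -> dot_normalize_le]; eauto.
Qed.

Lemma dot_ray_succ_unit_vertex i :
  dot (ray n beta (S i)) (unit_vertex i) = dot (ray n beta (S i)) (unit_vertex (S i)).
Proof.
  assert (H1 : normal_cone n unit_vertex (unit_vertex i) (ray n beta (S i)))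
    by (apply region_iff_normal_cone_unit_vertex, region_ray_r).
  assert (H2 : normal_cone n unit_vertex (unit_vertex (S i)) (ray n beta (S i)))
    by (apply region_iff_normal_cone_unit_vertex, region_ray_l).
  pose proof (H1 _ (mod_lt (S i))); pose proof (H2 _ (mod_lt i)).
  rewrite !unit_vertex_mod in *; lra.
Qed.

Lemma unit_vertex_succ_neq i : unit_vertex i <> unit_vertex (S i).
Proof.
  intros E.
  assert (Hin : region n beta (S i) (ray n beta i)).
  { apply region_iff_normal_cone_unit_vertex; rewrite <- E.
    apply region_iff_normal_cone_unit_vertex, region_ray_l. }
  apply region_cross_nonneg in Hin; auto.
  rewrite cross_antisym, cross_ray_succ in Hin by auto.
  destruct (bt_range n beta n_pos beta_range i) as [B0 B1].
  pose proof (sin_gt_0 _ B0 B1); lra.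
Qed.

Lemma cross_ray_succ_unit_vertex_le i :
  cross (ray n beta (S i)) (unit_vertex i) <= cross (ray n beta (S i)) (unit_vertex (S i)).
Proof.
  assert (Hcone : normal_cone n unit_vertex (unit_vertex i) (ray n beta i))
    by (apply region_iff_normal_cone_unit_vertex, region_ray_l).
  pose proof (Hcone _ (mod_lt (S i))) as Hle; rewrite unit_vertex_mod in Hle.
  pose proof (lagrange_dot (ray n beta i) (unit_vertex i) (ray n beta (S i))) as L1.
  pose proof (lagrange_dot (ray n beta i) (unit_vertex (S i)) (ray n beta (S i))) as L2.
  rewrite ray_unit, dot_ray_succ_unit_vertex in L1 by auto.
  rewrite ray_unit in L2 by auto.
  rewrite (cross_antisym _ (ray n beta i)), cross_ray_succ in L1, L2 by auto.
  destruct (bt_range n beta n_pos beta_range i) as [B0 B1].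
  pose proof (sin_gt_0 _ B0 B1); nra.
Qed.

(* Unit vertices i and i + 1 are mirror images in ray (i + 1), the normal of the edge
   joining them, and vertex i lies clockwise from that ray. *)
Lemma cross_ray_succ_unit_vertex i :
  cross (ray n beta (S i)) (unit_vertex (S i)) = - cross (ray n beta (S i)) (unit_vertex i) /\
  cross (ray n beta (S i)) (unit_vertex i) < 0.
Proof.
  destruct (unit_same_dot (ray n beta (S i)) (unit_vertex i) (unit_vertex (S i)))
    as [Hopp Hnz]; auto using ray_unit, unit_vertex_unit, dot_ray_succ_unit_vertex,
    unit_vertex_succ_neq.
  pose proof (cross_ray_succ_unit_vertex_le i); split; [assumption | lra].
Qed.

Lemma cross_ray_unit_vertex_pos k : 0 < cross (ray n beta k) (unit_vertex k).
Proof.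
  destruct (cross_ray_succ_unit_vertex (k + n - 1)) as [Hopp Hneg].
  replace (S (k + n - 1)) with (k + n)%nat in * by lia.
  rewrite ray_add_n, unit_vertex_add_n in * by auto; lra.
Qed.

Definition ray_vertex_angle k := acos (dot (ray n beta k) (unit_vertex k)).

Lemma ray_vertex_angle_spec k :
  0 < ray_vertex_angle k < PI /\
  cos (ray_vertex_angle k) = dot (ray n beta k) (unit_vertex k) /\
  sin (ray_vertex_angle k) = cross (ray n beta k) (unit_vertex k).
Proof.
  apply acos_unit_pos; [|apply cross_ray_unit_vertex_pos].
  pose proof (lagrange_dot (unit_vertex k) (unit_vertex k) (ray n beta k)) as L.
  rewrite ray_unit, unit_vertex_unit in L by auto; lra.
Qed.

Lemma unit_vertex_dir k :
  unit_vertex k = dir (theta_lift n beta k + ray_vertex_angle k).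
Proof.
  destruct (ray_vertex_angle_spec k) as [_ [Hc Hs]].
  apply eq_dir_of_dot_cross; rewrite <- ray_dir by auto; auto.
Qed.

Lemma ray_vertex_angle_step k :
  ray_vertex_angle k + ray_vertex_angle (S k) = bt n beta k.
Proof.
  destruct (ray_vertex_angle_spec k) as [[A0 A1] _].
  destruct (ray_vertex_angle_spec (S k)) as [[S0 S1] [Hcos _]].
  destruct (cross_ray_succ_unit_vertex k) as [_ Hneg].
  pose proof (bt_range n beta n_pos beta_range k) as [B0 B1].
  rewrite <- dot_ray_succ_unit_vertex in Hcos.
  rewrite ray_dir, unit_vertex_dir, dot_dir in Hcos by auto.
  rewrite ray_dir, unit_vertex_dir, cross_dir in Hneg by auto.
  unfold theta_lift in Hcos, Hneg; simpl in Hcos, Hneg.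
  replace (_ + _ - (_ + _)) with (ray_vertex_angle k - bt n beta k) in Hcos, Hneg by ring.
  assert (Hlt : ray_vertex_angle k < bt n beta k).
  { destruct (Rlt_le_dec (ray_vertex_angle k) (bt n beta k)) as [|Hge]; [assumption|].
    pose proof (sin_ge_0 (ray_vertex_angle k - bt n beta k)); lra. }
  rewrite <- (cos_neg (ray_vertex_angle k - _)), Ropp_minus_distr in Hcos.
  apply cos_inj in Hcos; lra.
Qed.

Lemma vertex_angles_of_inscribed : vertex_angles n beta ray_vertex_angle.
Proof.
  split.
  - intros k; apply ray_vertex_angle_spec.
  - apply ray_vertex_angle_step.
  - intros k; unfold ray_vertex_angle.
    rewrite ray_add_n, unit_vertex_add_n by auto; reflexivity.
Qed.

End InscribedPolygon.

Lemma inscribable_iff_vertex_angles n beta :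
  (0 < n)%nat -> (forall i, (i < n)%nat -> 0 < beta i < PI) -> rsum beta n = 2 * PI ->
  inscribable n beta <-> exists g, vertex_angles n beta g.
Proof.
  intros Hn Hb Hs; split.
  - intros [V [c [r [Hr [Hc Hf]]]]].
    eexists; eapply vertex_angles_of_inscribed; eauto.
  - intros [g Hg]; eapply inscribable_of_vertex_angles; eauto.
Qed.

(** * Positive solutions of the cyclic system *)

Definition alt_sum (n : nat) (beta : nat -> R) (j : nat) : R :=
  rsum (fun k => (-1) ^ k * bt n beta (j + k)) n.

Section OddProfile.

Variable n : nat.
Variable beta : nat -> R.
Hypothesis n_odd : Nat.odd n = true.

Lemma alt_sum_add_n k : alt_sum n beta (k + n) = alt_sum n beta k.
Proof.
  apply rsum_ext; intros i _; replace (k + n + i)%nat with (k + i + n)%nat by lia.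
  rewrite bt_add_n; reflexivity.
Qed.

Lemma alt_sum_step k : alt_sum n beta k + alt_sum n beta (S k) = 2 * bt n beta k.
Proof.
  apply Nat.odd_spec in n_odd as [m Hm]; unfold alt_sum; rewrite Hm.
  replace (2 * m + 1)%nat with (S (2 * m)) by lia.
  rewrite rsum_succ_l; cbn [rsum]; rewrite Nat.add_0_r.
  rewrite (rsum_ext (fun i => (-1) ^ S i * _)
             (fun i => - ((-1) ^ i * bt (S (2 * m)) beta (S k + i))))
    by (intros; replace (k + S i)%nat with (S k + i)%nat by lia; simpl; ring).
  rewrite rsum_opp, pow_m1_even.
  replace (S k + 2 * m)%nat with (k + S (2 * m))%nat by lia.
  rewrite bt_add_n; ring.
Qed.

Lemma alt_sum_vertex_angles g : vertex_angles n beta g -> forall j, alt_sum n beta j = 2 * g j.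
Proof.
  intros [_ Hstep Hper] j; unfold alt_sum.
  rewrite (rsum_ext _ (fun k => (-1) ^ k * g (j + k)%nat - (-1) ^ S k * g (j + S k)%nat)).
  - rewrite (rsum_telescope (fun k => (-1) ^ k * g (j + k)%nat)).
    apply Nat.odd_spec in n_odd as [m Hm].
    replace ((-1) ^ n) with (-1) by (rewrite Hm, pow_m1_odd; reflexivity).
    rewrite Nat.add_0_r, Hper; simpl; ring.
  - intros i _; rewrite <- Hstep; replace (j + S i)%nat with (S (j + i)) by lia; simpl; ring.
Qed.

Lemma vertex_angles_iff_odd :
  (exists g, vertex_angles n beta g) <-> forall j, (j < n)%nat -> alt_sum n beta j > 0.
Proof.
  split.
  - intros [g Hg] j _; rewrite (alt_sum_vertex_angles g Hg).
    pose proof (vertex_angles_pos n beta g Hg j); lra.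
  - intros Hpos; exists (fun j => alt_sum n beta j / 2); split.
    + apply periodic_pos with n.
      * destruct n; [discriminate | lia].
      * intros k; rewrite alt_sum_add_n; reflexivity.
      * intros k Hk; specialize (Hpos k Hk); lra.
    + intros k; pose proof (alt_sum_step k); lra.
    + intros k; rewrite alt_sum_add_n; reflexivity.
Qed.

End OddProfile.

Definition skip_sum (n : nat) (beta : nat -> R) (m h j : nat) : R :=
  rsum (fun i => bt n beta (2 * (i + 1) + j)) h
  + rsum (fun i => bt n beta (2 * (i + h + 1) + 1 + j)) (m - 1 - h).

Fixpoint alt_partial (n : nat) (beta : nat -> R) (k : nat) : R :=
  match k with O => 0 | S k' => bt n beta k' - alt_partial n beta k' end.

Section EvenProfile.

Variable n m : nat.
Variable beta : nat -> R.
Hypothesis n_even : n = (2 * m)%nat.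
Hypothesis m_pos : (0 < m)%nat.
Hypothesis beta_sum : rsum beta n = 2 * PI.

Section CyclicSolution.

Variable f : nat -> R.
Hypothesis f_step : forall k, f k + f (S k) = bt n beta k.
Hypothesis f_periodic : forall k, f (k + n)%nat = f k.

Lemma rsum_window_cyclic_solution a : rsum (fun k => f (a + k)%nat) n = PI.
Proof.
  rewrite rsum_shift_periodic by auto.
  pose proof (rsum_bt n beta beta_sum) as Hs.
  rewrite (rsum_ext _ (fun k => f k + f (S k))), rsum_plus in Hs by auto.
  pose proof (rsum_shift_periodic f n f_periodic 1) as W; simpl in W; lra.
Qed.

(* Each angle in the two sums splits as f k + f (k + 1); together these cover the
   window of f from j + 1 except its two terms f (j + 1) and f (j + 2 h + 2). *)
Lemma skip_sum_cyclic_solution h j :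
  (h < m)%nat -> skip_sum n beta m h j = PI - f (j + 1)%nat - f (j + 2 * h + 2)%nat.
Proof.
  intros Hh; unfold skip_sum.
  pose proof (rsum_window_cyclic_solution (j + 1)) as W.
  replace n with (1 + (2 * h + (1 + 2 * (m - 1 - h))))%nat in W by lia.
  rewrite !rsum_add in W; cbn [rsum] in W.
  rewrite <- !rsum_pairs in W.
  rewrite (rsum_ext _ (fun i => bt n beta (2 * (i + 1) + j))) in W
    by (intros; rewrite <- f_step; f_equal; f_equal; lia).
  rewrite (rsum_ext _ (fun i => bt n beta (2 * (i + h + 1) + 1 + j)) (m - 1 - h)) in W
    by (intros; rewrite <- f_step; f_equal; f_equal; lia).
  replace (j + 1 + (1 + (2 * h + 0)))%nat with (j + 2 * h + 2)%nat in W by lia.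
  rewrite Nat.add_0_r in W; lra.
Qed.

Lemma vertex_angles_of_min_pos :
  (forall a b, (a < m)%nat -> (b < m)%nat -> 0 < f (2 * a)%nat + f (2 * b + 1)%nat) ->
  exists g, vertex_angles n beta g.
Proof.
  intros Hpos.
  destruct (argmin_lt (fun l => f (2 * l)%nat) m m_pos) as [a [Ha Hmin_even]].
  destruct (argmin_lt (fun l => f (2 * l + 1)%nat) m m_pos) as [b [Hb Hmin_odd]].
  pose proof (Hpos a b Ha Hb) as Hab.
  set (t := (f (2 * b + 1)%nat - f (2 * a)%nat) / 2).
  assert (Hsign : forall k, (-1) ^ (k + n) = (-1) ^ k)
    by (intros; rewrite pow_add, n_even, pow_m1_even; ring).
  exists (fun k => f k + (-1) ^ k * t); split.
  - apply periodic_pos with n; [lia | intros; rewrite f_periodic, Hsign; reflexivity|].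
    intros k Hk; destruct (Nat.Even_or_Odd k) as [[l ->]|[l ->]].
    + rewrite pow_m1_even; specialize (Hmin_even l ltac:(lia)); cbv beta in Hmin_even.
      unfold t; lra.
    + rewrite pow_m1_odd; specialize (Hmin_odd l ltac:(lia)); cbv beta in Hmin_odd.
      unfold t; lra.
  - intros k; rewrite <- f_step; simpl; ring.
  - intros k; rewrite f_periodic, Hsign; reflexivity.
Qed.

End CyclicSolution.

Lemma alt_partial_step k : alt_partial n beta k + alt_partial n beta (S k) = bt n beta k.
Proof. simpl; ring. Qed.

Lemma alt_partial_double i :
  alt_partial n beta (2 * i) = rsum (fun l => bt n beta (2 * l + 1) - bt n beta (2 * l)) i.
Proof.
  induction i as [|i IH]; [reflexivity|].
  replace (2 * S i)%nat with (S (S (2 * i))) by lia; cbn [alt_partial rsum].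
  rewrite <- IH; replace (2 * i + 1)%nat with (S (2 * i)) by lia; ring.
Qed.

Hypothesis alt_half : rsum (fun l => beta (2 * l)%nat) m = PI.

Lemma alt_partial_add_n k : alt_partial n beta (k + n) = alt_partial n beta k.
Proof.
  assert (Hn : alt_partial n beta n = 0).
  { pose proof (rsum_pairs (bt n beta) m) as Hpairs.
    rewrite <- n_even, rsum_bt, rsum_plus in Hpairs by auto.
    rewrite (rsum_ext (fun i => bt n beta (2 * i)) (fun l => beta (2 * l)%nat)) in Hpairs
      by (intros; apply bt_small; lia).
    rewrite n_even at 2; rewrite alt_partial_double.
    rewrite (rsum_ext _ (fun l => bt n beta (2 * l + 1) + - beta (2 * l)%nat))
      by (intros; rewrite (bt_small _ _ (2 * _)) by lia; ring).
    rewrite rsum_plus, rsum_opp; lra. }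
  induction k as [|k IH]; [exact Hn|].
  cbn [alt_partial]; rewrite Nat.add_succ_l; cbn [alt_partial].
  rewrite IH, bt_add_n; reflexivity.
Qed.

(* Every pair (even index, odd index) is the pair of terms skipped by some skip_sum,
   up to a shift by the period n. *)
Lemma alt_partial_min_pos :
  (forall h j, (h < m)%nat -> (j < n)%nat -> skip_sum n beta m h j < PI) ->
  forall a b, (a < m)%nat -> (b < m)%nat ->
    0 < alt_partial n beta (2 * a) + alt_partial n beta (2 * b + 1).
Proof.
  intros Hskip a b Ha Hb.
  assert (Hpair : forall h, (h < m)%nat ->
            0 < alt_partial n beta (2 * b + 1) + alt_partial n beta (2 * b + 2 * h + 2)).
  { intros h Hh; specialize (Hskip h (2 * b)%nat Hh ltac:(lia)).
    rewrite (skip_sum_cyclic_solution _ alt_partial_step alt_partial_add_n) in Hskip by auto.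
    lra. }
  destruct (Nat.lt_ge_cases b a).
  - specialize (Hpair (a - b - 1)%nat ltac:(lia)).
    replace (2 * b + 2 * (a - b - 1) + 2)%nat with (2 * a)%nat in Hpair by lia; lra.
  - specialize (Hpair (m + a - b - 1)%nat ltac:(lia)).
    replace (2 * b + 2 * (m + a - b - 1) + 2)%nat with (2 * a + n)%nat in Hpair by lia.
    rewrite alt_partial_add_n in Hpair; lra.
Qed.

Lemma vertex_angles_iff_even :
  (exists g, vertex_angles n beta g) <->
  forall h j, (h < m)%nat -> (j < n)%nat -> skip_sum n beta m h j < PI.
Proof.
  split.
  - intros [g [Hpos Hstep Hper]] h j Hh _.
    rewrite (skip_sum_cyclic_solution g Hstep Hper) by auto.
    pose proof (Hpos (j + 1)%nat); pose proof (Hpos (j + 2 * h + 2)%nat); lra.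
  - intros Hskip; apply (vertex_angles_of_min_pos (alt_partial n beta)).
    + apply alt_partial_step.
    + apply alt_partial_add_n.
    + apply alt_partial_min_pos; auto.
Qed.

End EvenProfile.

(** * Virtual inscribability *)

Lemma comp_refl_double n beta v :
  (0 < n)%nat -> rsum beta n = 2 * PI ->
  forall i, comp_refl n beta (2 * i) v = rot (2 * rsum (fun l => bt n beta (2 * l)) i) v.
Proof.
  intros Hn Hs i; induction i as [|i IH].
  - simpl; rewrite Rmult_0_r, rot_0; reflexivity.
  - replace (2 * S i)%nat with (S (S (2 * i))) by lia; cbn [comp_refl].
    rewrite IH, !ray_dir, refl_refl_dir, rot_add by auto.
    unfold theta_lift; cbn [rsum]; f_equal; ring.
Qed.

(* cos (2 s) = 1 together with 0 < s < 2 PI forces s = PI. *)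
Lemma alt_half_of_virtually_inscribable n beta m :
  n = (2 * m)%nat -> (0 < m)%nat -> complete_pointed_profile n beta ->
  virtually_inscribable n beta -> rsum (fun l => beta (2 * l)%nat) m = PI.
Proof.
  intros Hnm Hm [Hb Hs] [v [Hv Hfix]].
  set (s := rsum (fun l => beta (2 * l)%nat) m).
  assert (Hs_range : 0 < s < 2 * PI).
  { assert (Hodd : 0 < rsum (fun l => beta (2 * l + 1)%nat) m)
      by (apply rsum_pos; auto; intros; apply Hb; lia).
    assert (Heven : 0 < s) by (apply rsum_pos; auto; intros; apply Hb; lia).
    rewrite <- Hs, Hnm, <- rsum_pairs, rsum_plus; fold s; lra. }
  rewrite Hnm in Hfix at 2; rewrite comp_refl_double in Hfix by (lia || assumption).
  rewrite (rsum_ext _ (fun l => beta (2 * l)%nat)) in Hfix by (intros; apply bt_small; lia).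
  apply rot_fixed_nonzero in Hfix; auto; fold s in Hfix.
  rewrite cos_2a_sin in Hfix.
  assert (Hsin : sin s = 0) by nra.
  destruct (sin_eq_0_0 s Hsin) as [k Hk].
  pose proof PI_RGT_0.
  assert (Hk1 : (0 < k < 2)%Z) by (split; apply lt_IZR; nra).
  replace k with 1%Z in Hk by lia; rewrite Hk; ring.
Qed.

Theorem theorem3p5 (n : nat) (beta : nat -> R) :
  (3 <= n)%nat ->
  complete_pointed_profile n beta ->
  virtually_inscribable n beta ->
  (Nat.odd n = true ->
     (inscribable n beta <->
      forall j, (j < n)%nat ->
        rsum (fun k => (-1) ^ k * bt n beta (j + k)) n > 0)) /\
  (forall m, n = (2 * m)%nat ->
     (inscribable n beta <->
      forall h j, (h < m)%nat -> (j < n)%nat ->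
        rsum (fun i => bt n beta (2 * (i + 1) + j)) h
        + rsum (fun i => bt n beta (2 * (i + h + 1) + 1 + j)) (m - 1 - h) < PI)).
Proof.
  intros Hn Hcp Hvirt; pose proof Hcp as [Hb Hs].
  pose proof (inscribable_iff_vertex_angles n beta ltac:(lia) Hb Hs) as Hinsc.
  split.
  - intros Hodd; rewrite Hinsc; apply vertex_angles_iff_odd; exact Hodd.
  - intros m Hnm; rewrite Hinsc; apply vertex_angles_iff_even; [lia | lia | exact Hs |].
    apply alt_half_of_virtually_inscribable with n; auto; lia.
Qed.
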